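(* (i) Let $G$ be a $4$-connected simple triangulation of order $n$. Then \[ \rho(G) \le \frac{n+3}{8} + \varepsilon_n, \] where $\varepsilon_n = 0$ if $n\equiv 1 \pmod 4$, $\varepsilon_n = \frac{3}{8(n-1)}$ if $n \equiv 0,2 \pmod 4$, and $\varepsilon_n = \frac{1}{2(n-1)}$ if $n\equiv 3\pmod 4$. (ii) Let $G$ be a simple quadrangulation of order $n$. Then \[ \rho(G) \le \frac{n+1}{4} + \varepsilon_n, \] where $\varepsilon_n = 0$ if $n$ is odd and $\varepsilon_n = \frac{1}{4(n-1)}$ if $n$ is even.
   Context: A simple triangulation is a plane graph without loops or multiple edges in which every face (including the outer face) is bounded by a triangle; a simple quadrangulation is a plane graph without loops or multiple edges in which every face is bounded by a $4$-cycle. A graph is $k$-connected if it has more than $k$ vertices and remains connected after deleting any fewer than $k$ vertices. For a connected graph $G$ of order $n\ge 2$ and a vertex $v$, let $\sigma(v)=\sum_{u\in V(G)} d_G(u,v)$ be the total distance of $v$ ($d_G$ the usual shortest-path distance), $\overline{\sigma}(v) = \sigma(v)/(n-1)$, and the remoteness $\rho(G) = \max_{v\in V(G)} \overline{\sigma}(v)$. *)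

From HB Require Import structures.
From mathcomp Require Import all_boot all_order all_algebra.
Set Implicit Arguments. Unset Strict Implicit. Unset Printing Implicit Defensive.
Import Order.TTheory GRing.Theory Num.Theory.

(* simple graph: no loops, undirected (hence no multiple edges) *)
Definition simple_graph (T : finType) (e : rel T) : Prop :=
  symmetric e /\ irreflexive e.

Definition connected_graph (T : finType) (e : rel T) : Prop :=
  forall x y : T, connect e x y.

Definition k_connected (T : finType) (e : rel T) (k : nat) : Prop :=
  k < #|T| /\
  forall S : {set T}, #|S| < k ->
    forall x y : T, x \notin S -> y \notin S ->
      connect [rel a b | [&& e a b, a \notin S & b \notin S]] x y.

(* rot u is a cyclic ordering of the neighbours of u *)
Definition rotation_system (T : finType) (e : rel T) (rot : T -> T -> T) : Prop :=
  forall u v, e u v ->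
    e u (rot u v) /\ (forall w, e u w -> fconnect (rot u) v w).

Definition darts (T : finType) (e : rel T) : {set T * T} :=
  [set d | e d.1 d.2].

(* face permutation: traverse dart (u,v), then turn at v *)
Definition face_perm (T : finType) (rot : T -> T -> T) (d : T * T) : T * T :=
  (d.2, rot d.2 d.1).

Definition faces (T : finType) (e : rel T) (rot : T -> T -> T) : {set {set T * T}} :=
  [set [set d' | fconnect (face_perm rot) d d'] | d in darts e].

(* the rotation system describes a cellular embedding of the connected graph
   in the sphere: Euler's formula V - E + F = 2 (genus 0), with E = #darts/2 *)
Definition plane_embedding (T : finType) (e : rel T) (rot : T -> T -> T) : Prop :=
  [/\ rotation_system e rot, connected_graph e &
      2 * #|T| + 2 * #|faces e rot| = #|darts e| + 4].

Definition faces_are_cycles (T : finType) (e : rel T) (rot : T -> T -> T) (k : nat) : Prop :=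
  forall f, f \in faces e rot -> #|f| = k /\ #|[set d.1 | d in f]| = k.

Definition simple_triangulation (T : finType) (e : rel T) : Prop :=
  simple_graph e /\ exists rot, plane_embedding e rot /\ faces_are_cycles e rot 3.

Definition simple_quadrangulation (T : finType) (e : rel T) : Prop :=
  simple_graph e /\ exists rot, plane_embedding e rot /\ faces_are_cycles e rot 4.

Fixpoint nwalk (T : finType) (e : rel T) (n : nat) (u v : T) : bool :=
  match n with
  | 0 => u == v
  | n'.+1 => [exists w, e u w && nwalk e n' w v]
  end.

(* shortest-path distance: least n with a walk of length n (for a connected
   graph such an n < #|T| exists) *)
Definition dist (T : finType) (e : rel T) (u v : T) : nat :=
  find (fun n => nwalk e n u v) (iota 0 #|T|).

Definition sigma (T : finType) (e : rel T) (v : T) : nat :=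
  \sum_(u : T) dist e u v.

(* remoteness: max over v of sigma(v)/(n-1) (all values are >= 0) *)
Definition remoteness (T : finType) (e : rel T) : rat :=
  \big[Num.max/0%R]_(v : T) ((sigma e v)%:R / (#|T|.-1)%:R)%R.

Local Open Scope ring_scope.

Definition eps_tri (n : nat) : rat :=
  if (n %% 4 == 1)%N then 0
  else if (n %% 4 == 3)%N then 1 / (2 * (n.-1)%:R)
  else 3 / (8 * (n.-1)%:R).

Definition eps_quad (n : nat) : rat :=
  if odd n then 0 else 1 / (4 * (n.-1)%:R).

From HB Require Import structures.
From mathcomp Require Import all_boot all_order all_algebra.
From mathcomp Require Import zify ring lra.
Set Implicit Arguments. Unset Strict Implicit. Unset Printing Implicit Defensive.
Import Order.TTheory GRing.Theory Num.Theory.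

(* Fix a vertex v and split the vertices into the layers L_i of vertices at
   distance i from v.  The whole argument rests on a lower bound c for the size
   of every intermediate layer L_i (0 < i < eccentricity):
   - in a 4-connected graph each such layer separates v from the farther
     vertices, hence has at least c = 4 vertices (layer_ge4);
   - in a plane quadrangulation a layer consisting of a single vertex w would
     force a face x w y z with x in L_j, y in L_(j+2) and z in L_(j+1) \ {w},
     hence c = 2 (quad_layer_ge2, via the face-cycle lemma quad_face).
   Given such a c, at most n - 1 - c k vertices lie beyond level k, so
   sigma(v) = \sum_k #{u | k < d(u,v)} is at most
   layer_bound c n = \sum_(k < n) (n - 1 - c k) (sigma_le_layer_bound).
   Finally layer_bound is evaluated in closed form for c = 4 and c = 2 and the
   resulting natural-number inequalities are divided by n - 1. *)

Definition layer (T : finType) (D : T -> nat) (i : nat) : {set T} :=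
  [set w | D w == i].

Definition avoiding (T : finType) (e : rel T) (S : {set T}) : rel T :=
  [rel a b | [&& e a b, a \notin S & b \notin S]].

Section Distance.
Variables (T : finType) (e : rel T) (v : T).
Hypothesis esym : symmetric e.
Hypothesis econn : connected_graph e.

Local Notation D u := (dist e u v).

Lemma dist_le k u : nwalk e k u v -> D u <= k.
Proof.
move=> hk; rewrite /dist.
case: (ltnP k #|T|) => hkn; last first.
  by apply: leq_trans (find_size _ _) _; rewrite size_iota.
rewrite leqNgt; apply/negP => hlt.
by have := before_find 0 hlt; rewrite nth_iota //= add0n hk.
Qed.

Lemma nwalk_path x p : path e x p -> nwalk e (size p) x (last x p).
Proof.
elim: p x => [|y p IH] x /=; first by rewrite eqxx.
by case/andP=> hxy hp; apply/existsP; exists y; rewrite hxy IH.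
Qed.

(* In a connected graph, dist is realised by a walk (a shortest path has
   fewer than #|T| edges, so it is found by the search in dist). *)
Lemma dist_walk u : nwalk e (D u) u v.
Proof.
have [k hk hw] : exists2 k, k < #|T| & nwalk e k u v.
  have /connectP [p hp ->] := econn u v.
  case/shortenP: hp => p' hp' hu _; exists (size p'); last exact: nwalk_path.
  by have := max_card (mem (u :: p')); rewrite (card_uniqP hu).
have hh : has (fun n => nwalk e n u v) (iota 0 #|T|).
  by apply/hasP; exists k; rewrite ?mem_iota.
have hf : find (fun n => nwalk e n u v) (iota 0 #|T|) < #|T|.
  by rewrite -{2}(size_iota 0 #|T|) -has_find.
by have := nth_find 0 hh; rewrite nth_iota ?add0n.
Qed.

Lemma dist_leT u : D u <= #|T|.
Proof. by apply: leq_trans (find_size _ _) _; rewrite size_iota. Qed.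

Lemma dist_v : D v = 0.
Proof. by apply/eqP; rewrite -leqn0; apply: dist_le; rewrite /= eqxx. Qed.

Lemma dist_adj a b : e a b -> D a <= (D b).+1.
Proof.
move=> hab; apply: dist_le => /=; apply/existsP; exists b.
by rewrite hab dist_walk.
Qed.

Lemma dist_down u k : D u = k.+1 -> exists2 w, e u w & D w = k.
Proof.
move=> h; have := dist_walk u; rewrite h => /existsP [w /andP [huw hw]].
exists w => //; apply/eqP; rewrite eqn_leq dist_le //=.
by have := dist_adj huw; rewrite h.
Qed.

Lemma dist_level u k : k <= D u -> exists w, D w = k.
Proof.
move=> hk; have [n hn] : exists n, D u = n by eexists.
rewrite hn in hk; elim: n u hn hk => [|n IH] u hu hk.
  by exists u; rewrite hu; move: hk; rewrite leqn0 => /eqP.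
case: (ltngtP k n.+1) hk => // [hlt _|-> _]; last by exists u.
by have [w _ hw] := dist_down hu; apply: (IH w).
Qed.

(* Each intermediate layer separates v from the vertices beyond it: moving
   along an edge changes the distance by at most one. *)
Lemma layer_separates i u : 0 < i -> i < D u ->
  ~~ connect (avoiding e (layer (fun w => D w) i)) u v.
Proof.
move=> hi hu; apply/negP => hc.
have hcl : closed (avoiding e (layer (fun w => D w) i)) [pred a | i < D a].
  move=> a b /and3P [hab ha hb]; rewrite !inE in ha hb *.
  have := dist_adj hab; have : D b <= (D a).+1 by rewrite dist_adj // esym.
  by move=> h1 h2; apply/idP/idP; lia.
by have := closed_connect hcl hc; rewrite !inE hu dist_v.
Qed.

Lemma layer_ge4 : k_connected e 4 ->
  forall i u, 0 < i -> i < D u -> 4 <= #|layer (fun w => D w) i|.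
Proof.
move=> [_ hk] i u hi hu; rewrite leqNgt; apply/negP => hS.
have hu' : u \notin layer (fun w => D w) i by rewrite inE gtn_eqF.
have hv' : v \notin layer (fun w => D w) i by rewrite inE dist_v eq_sym gtn_eqF.
by have := layer_separates hi hu; rewrite (hk _ hS u v hu' hv').
Qed.

End Distance.

Section Rotation.
Variables (T : finType) (e : rel T) (rot : T -> T -> T).
Hypothesis esym : symmetric e.
Hypothesis hrot : rotation_system e rot.

Local Notation f := (face_perm rot).

Lemma rot_edge u a : e u a -> e u (rot u a).
Proof. by move=> ha; have [] := hrot ha. Qed.

(* rot u permutes the neighbours of u cyclically, so it is injective on them. *)
Lemma rot_inj u a a' : e u a -> e u a' -> rot u a = rot u a' -> a = a'.
Proof.
move=> ha ha' heq; have hc := rot_edge ha; set c := rot u a in hc heq.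
have e1 := iter_findex ((hrot hc).2 a ha).
have e2 := iter_findex ((hrot hc).2 a' ha').
move: (findex _ c a) (findex _ c a') e1 e2 => k k' e1 e2.
have f1 : iter k.+1 (rot u) c = c by rewrite iterS e1.
have f2 : iter k'.+1 (rot u) c = c by rewrite iterS e2 -heq.
by rewrite -e1 -e2 -{1}f2 -iterD addnS -addSn addnC iterD f1.
Qed.

Lemma rotation_switch (P : pred T) w a b : e w a -> e w b -> P a -> ~~ P b ->
  exists2 x, e w x & P x && ~~ P (rot w x).
Proof.
move=> hwa hwb hPa; have := iter_findex ((hrot hwa).2 b hwb).
move: (findex _ _ _) => m; elim: m b {hwb} => [|m IH] b /= <- hPb.
  by rewrite hPa in hPb.
have hm : e w (iter m (rot w) a) by elim: (m) => //= k; apply: rot_edge.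
case hP: (P (iter m (rot w) a)); last by apply: (IH _ erefl); rewrite hP.
by exists (iter m (rot w) a); rewrite // hP.
Qed.

Lemma face_perm_dart d : d \in darts e -> f d \in darts e.
Proof. by rewrite !inE /= => hd; apply: rot_edge; rewrite esym. Qed.

Lemma face_perm_inj : {in darts e &, injective f}.
Proof.
move=> [a b] [a' b']; rewrite !inE /face_perm /= => hd hd' [hb hr].
subst b'; congr (_, _); apply: (rot_inj _ _ hr); by rewrite esym.
Qed.

Lemma face_cycle k d : faces_are_cycles e rot k -> d \in darts e ->
  iter k f d = d /\ uniq [seq x.1 | x <- traject f d k].
Proof.
move=> hfc hd; set O := [set d' | fconnect f d d'].
have [hOk hVk] := hfc O (imset_f _ hd).
have hord : order f d = k by rewrite -hOk cardsE.
split; first by rewrite -hord (iter_order_in face_perm_dart face_perm_inj).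
rewrite -hord -/(orbit f d); apply/card_uniqP; rewrite size_map size_orbit.
rewrite hord -hVk; apply: eq_card => y; apply/mapP/imsetP => -[x hx ->];
  by exists x; rewrite // ?inE fconnect_orbit in hx *.
Qed.

(* In a quadrangulation the face to the left of the dart (x, w) is the
   4-cycle x, w, y, z where y follows x around w and z follows w around y. *)
Lemma quad_face x w : faces_are_cycles e rot 4 -> e x w ->
  e (rot (rot w x) w) x /\ uniq [:: x; w; rot w x; rot (rot w x) w].
Proof.
move=> hfc hxw; have hd : (x, w) \in darts e by rewrite inE.
have [h4 hu] := face_cycle hfc hd; split => //.
have hwy : e w (rot w x) by apply: rot_edge; rewrite esym.
have hyz : e (rot w x) (rot (rot w x) w) by apply: rot_edge; rewrite esym.
have hzy : e (rot (rot w x) w) (rot w x) by rewrite esym.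
by move: h4 => /= [hx _]; rewrite -[X in e _ X]hx; apply: rot_edge.
Qed.

End Rotation.

(* If layer j+1 were a single vertex w, all neighbours of w would
   lie in layers j and j+2, so around w some neighbour x in layer j is followed
   by a neighbour y in layer j+2; the fourth vertex z of the quadrangle x w y z
   is adjacent to both, hence lies in layer j+1, i.e. z = w: impossible. *)
Lemma quad_layer_ge2 (T : finType) (e : rel T) (rot : T -> T -> T) (v : T) :
  simple_graph e -> connected_graph e -> rotation_system e rot ->
  faces_are_cycles e rot 4 ->
  forall i u, 0 < i -> i < dist e u v -> 2 <= #|layer (fun w => dist e w v) i|.
Proof.
move=> [esym eirr] hconn hrot hfc [//|j] u _ hu; rewrite leqNgt; apply/negP => hS.
pose D w := dist e w v.
have adj a b : e a b -> D a <= (D b).+1 /\ D b <= (D a).+1.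
  by move=> hab; rewrite !dist_adj // esym.
have [w hw] := dist_level hconn (ltnW hu).
have only_w z : D z = j.+1 -> z = w.
  move=> hz; apply/eqP/negPn/negP => hne; move: hS; rewrite ltnNge => /negP; apply.
  by apply/card_gt1P; exists z, w; rewrite !inE -/(D z) hz hw.
have [a hwa ha] := dist_down hconn hw.
have [b hb] := dist_level hconn hu.
have [c hbc /only_w hcw] := dist_down hconn hb.
have hwb : e w b by rewrite esym -hcw.
have hPb : ~~ (D b <= j) by rewrite /D hb; lia.
have [x hwx /andP [Dx Dy]] :=
  rotation_switch hrot (P := fun z => D z <= j) hwa hwb (eq_leq ha) hPb.
have hxw : e x w by rewrite esym.
have [hzx] := quad_face esym hrot hfc hxw.
set y := rot w x in Dy hzx *; set z := rot y w in hzx *.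
rewrite /= !inE => /and4P [_ /norP [_ hwz] _ _].
suff /only_w hzw : D z = j.+1 by rewrite hzw eqxx in hwz.
have hwy : e w y := rot_edge hrot hwx.
have hy : y != w by apply: contraTneq hwy => ->; rewrite eirr.
have hyz : e y z by apply: (rot_edge hrot); rewrite esym.
have [Dzx _] := adj _ _ hzx; have [Dyz _] := adj _ _ hyz; have [_ Dwy] := adj _ _ hwy.
have : D y != j.+1 by apply: contra hy => /eqP /only_w ->.
rewrite -/(D y) in Dy *; lia.
Qed.

Lemma sum_ltn d N : d <= N -> \sum_(k < N) (k < d : nat) = d.
Proof.
suff -> : \sum_(k < N) (k < d : nat) = minn d N by move=> hd; lia.
by elim: N => [|N IH]; rewrite ?big_ord0 ?big_ord_recr /= ?IH; lia.
Qed.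

(* The bound on a total distance when every intermediate layer has at least c
   vertices: level k is exceeded by at most n - 1 - c k vertices. *)
Definition layer_bound (c n : nat) : nat := \sum_(k < n) (n - 1 - c * k).

Section Counting.
Variables (T : finType) (c : nat) (D : T -> nat) (v : T).
Hypothesis hv : D v = 0.
Hypothesis hlayer : forall i u, 0 < i -> i < D u -> c <= #|layer D i|.
Hypothesis hD : forall u, D u <= #|T|.

(* Below a level k that is reached, there are v and k - 1 full layers. *)
Lemma count_below k u : 0 < k -> k <= D u -> 1 + c * (k - 1) <= #|[set w | D w < k]|.
Proof.
elim: k => [//|k IH] _ hk; case: k IH hk => [_ _|k IH hk].
  by rewrite muln0 addn0; apply/card_gt0P; exists v; rewrite inE hv.
have -> : [set w | D w < k.+2] = [set w | D w < k.+1] :|: layer D k.+1.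
  by apply/setP => w; rewrite !inE ltnS leq_eqVlt orbC.
rewrite cardsU (_ : _ :&: _ = set0) ?cards0 ?subn0; last first.
  by apply/setP => w; rewrite !inE; case: ltngtP.
have := IH erefl (ltnW hk); have := hlayer (ltn0Sn k) hk; lia.
Qed.

Lemma count_above k : #|[set u | k < D u]| <= #|T| - 1 - c * k.
Proof.
have [u hu|none] := pickP [pred u | k < D u]; last first.
  rewrite (_ : [set u | k < D u] = set0) ?cards0 //.
  by apply/setP => u; have := none u; rewrite !inE /= => ->.
have := count_below (ltn0Sn k) hu; have := cardsC [set w | D w < k.+1].
rewrite (_ : ~: _ = [set u | k < D u]); first by rewrite subSS subn0; lia.
by apply/setP => w; rewrite !inE ltnS -ltnNge.
Qed.

(* Writing D u = \sum_k [k < D u] and exchanging the sums. *)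
Lemma sum_le_layer_bound : \sum_u D u <= layer_bound c #|T|.
Proof.
rewrite (eq_bigr _ (fun u _ => esym (sum_ltn (hD u)))) exchange_big /=.
apply: leq_sum => k _; apply: leq_trans (count_above k).
rewrite -(sum1_card (mem [set u | k < D u])) [X in _ <= X]big_mkcond.
by apply: leq_sum => u _; rewrite inE.
Qed.

End Counting.

Lemma sigma_le_layer_bound (T : finType) (e : rel T) (c : nat) (v : T) :
  (forall i u, 0 < i -> i < dist e u v -> c <= #|layer (fun w => dist e w v) i|) ->
  sigma e v <= layer_bound c #|T|.
Proof.
move=> hlayer.
exact: (sum_le_layer_bound (D := fun w => dist e w v) (dist_v e v) hlayer (dist_leT e v)).
Qed.

(* Terms with k >= n vanish, so the range of summation may be enlarged. *)
Lemma layer_bound_widen c n N : 0 < c -> n <= N ->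
  \sum_(k < N) (n - 1 - c * k) = layer_bound c n.
Proof.
move=> hc; elim: N => [|N IH] hN; first by case: n hN.
have [hnN|hNn] := leqP n N; last by have -> : n = N.+1 by lia.
rewrite big_ord_recr /= IH // (_ : n - 1 - c * N = 0) ?addn0 //.
have : N <= c * N by rewrite leq_pmull.
lia.
Qed.

(* Peeling off the first term: the rest is the bound for n, shifted by c. *)
Lemma layer_bound_rec c n : 0 < c -> layer_bound c (n + c) = n + c - 1 + layer_bound c n.
Proof.
case: c => // c _; rewrite {1}/layer_bound addnS big_ord_recl muln0 subn0 subn1.
congr (_ + _); rewrite -(layer_bound_widen (ltn0Sn c) (leq_addr c n)).
by apply: eq_bigr => k _; rewrite lift0 /= mulnS; lia.
Qed.

Lemma layer_bound_quad n : 4 * layer_bound 2 n + odd n <= n * n.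
Proof.
elim/ltn_ind: n => -[|[|n]] IH; first by rewrite /layer_bound big_ord0.
  by rewrite /layer_bound big_ord_recl big_ord0.
have := IH n (ltnW (ltnSn _)); rewrite -[n.+2]addn2 layer_bound_rec // oddD /=; lia.
Qed.

(* The numerator of the correction term eps_tri, over the denominator 8. *)
Definition tri_excess (n : nat) : nat :=
  if n %% 4 == 1 then 0 else if n %% 4 == 3 then 4 else 3.

Lemma layer_bound_tri n : 8 * layer_bound 4 n <= (n + 3) * (n - 1) + tri_excess n.
Proof.
elim/ltn_ind: n => -[|[|[|[|n]]]] IH;
  try by rewrite /layer_bound /tri_excess ?big_ord_recl big_ord0.
have /IH : n < n.+4 by lia.
rewrite -[n.+4]addn4 layer_bound_rec // /tri_excess.
rewrite (_ : (n + 4) %% 4 = n %% 4) ?modnDr //.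
clear IH; case: n => [|n]; first by rewrite /layer_bound big_ord0.
case: ifP => _; [|case: ifP => _]; nia.
Qed.

Local Open Scope ring_scope.

Lemma ratio_bound (s N a d r : nat) : (0 < N)%N -> (0 < d)%N ->
  (d * s <= (N + a) * N + r)%N ->
  s%:R / N%:R <= (N%:R + a%:R) / d%:R + r%:R / d%:R / N%:R :> rat.
Proof.
move=> hN hd hs; have hN' : 0 < N%:R :> rat by rewrite ltr0n.
have hd' : 0 < d%:R :> rat by rewrite ltr0n.
rewrite ler_pdivrMr // mulrDl divfK ?gt_eqF //.
rewrite -(ler_nat rat) natrD !natrM natrD in hs.
rewrite (_ : _ + _ = ((N%:R + a%:R) * N%:R + r%:R) / d%:R); last by field; rewrite gt_eqF.
by rewrite ler_pdivlMr // mulrC.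
Qed.

Lemma eps_tri_E N : eps_tri N.+2 = (tri_excess N.+2)%:R / 8 / N.+1%:R.
Proof.
by rewrite /eps_tri /tri_excess; case: ifP => _; [|case: ifP => _];
  rewrite /= ?mul0r //; field; rewrite nat1r pnatr_eq0.
Qed.

Lemma eps_quad_E N : eps_quad N.+2 = (~~ odd N.+2)%:R / 4 / N.+1%:R.
Proof. by rewrite /eps_quad; case: ifP => _; rewrite /= ?mul0r //; field; rewrite nat1r pnatr_eq0. Qed.

Lemma eps_tri_ge0 n : 0 <= eps_tri n.
Proof.
by rewrite /eps_tri; case: ifP => _; [|case: ifP => _]; rewrite // divr_ge0 // mulr_ge0.
Qed.

Lemma eps_quad_ge0 n : 0 <= eps_quad n.
Proof. by rewrite /eps_quad; case: ifP => _; rewrite // divr_ge0 // mulr_ge0. Qed.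

(* For n < 2 the ratio is s / 0 = 0 and both bounds are nonnegative. *)
Lemma small_order_ratio (s n : nat) (q : rat) : (n < 2)%N -> 0 <= q ->
  s%:R / (n.-1)%:R <= q.
Proof. by case: n => [|[|]] // _ hq; rewrite invr0 mulr0. Qed.

Lemma tri_ratio s n : (s <= layer_bound 4 n)%N ->
  s%:R / (n.-1)%:R <= (n%:R + 3) / 8 + eps_tri n.
Proof.
case: n => [|[|N]] hs; try by apply: small_order_ratio; rewrite // addr_ge0 ?eps_tri_ge0.
have hs' : (8 * s <= (N.+1 + 4) * N.+1 + tri_excess N.+2)%N.
  by have := layer_bound_tri N.+2; nia.
apply: le_trans (ratio_bound _ _ hs') _ => //.
by rewrite eps_tri_E -!natr1; lra.
Qed.

Lemma quad_ratio s n : (s <= layer_bound 2 n)%N ->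
  s%:R / (n.-1)%:R <= (n%:R + 1) / 4 + eps_quad n.
Proof.
case: n => [|[|N]] hs; try by apply: small_order_ratio; rewrite // addr_ge0 ?eps_quad_ge0.
have hs' : (4 * s <= (N.+1 + 2) * N.+1 + ~~ odd N.+2)%N.
  by have := layer_bound_quad N.+2; case: (odd N.+2); nia.
apply: le_trans (ratio_bound _ _ hs') _ => //.
by rewrite eps_quad_E -!natr1; lra.
Qed.

Lemma remoteness_le (T : finType) (e : rel T) (q : rat) : 0 <= q ->
  (forall v, (sigma e v)%:R / (#|T|.-1)%:R <= q) -> remoteness e <= q.
Proof. by move=> hq hv; apply/bigmax_leP. Qed.

Theorem mainTheorem1 :
  (forall (T : finType) (e : rel T),
      simple_triangulation e -> k_connected e 4 ->
      remoteness e <= (#|T|%:R + 3) / 8 + eps_tri #|T|) /\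
  (forall (T : finType) (e : rel T),
      simple_quadrangulation e ->
      remoteness e <= (#|T|%:R + 1) / 4 + eps_quad #|T|).
Proof.
split.
- move=> T e [[esym _] [rot [[_ hconn _] _]]] h4.
  apply: remoteness_le => [|v]; first by rewrite addr_ge0 ?eps_tri_ge0 ?divr_ge0 ?addr_ge0.
  apply/tri_ratio/sigma_le_layer_bound => //; exact: layer_ge4.
- move=> T e [hsimple [rot [[hrot hconn _] hquad]]].
  apply: remoteness_le => [|v]; first by rewrite addr_ge0 ?eps_quad_ge0 ?divr_ge0 ?addr_ge0.
  apply/quad_ratio/sigma_le_layer_bound => //; exact: quad_layer_ge2 hquad.
Qed.
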